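(* Let $D$ be a pv-monoid (idempotent, with symmetric valuation function) that is left-$\oplus$-distributive and in which $\otimes$ is commutative and associative. Let $P$ be a nonempty finite set of ports, $d_1,d_2\in D$ and $\zeta_1,\zeta_2\in PCL(D,P)$. Then \[(d_1\otimes\zeta_1)\uplus(d_2\otimes\zeta_2)\equiv d_1\otimes d_2\otimes(\zeta_1\uplus\zeta_2).\]
   Context: A valuation monoid $(D,\oplus,\mathrm{val},0)$ consists of a commutative monoid $(D,\oplus,0)$ and a map $\mathrm{val}:D^+\to D$ ($D^+$ = nonempty finite sequences over $D$) with $\mathrm{val}(d)=d$ and $\mathrm{val}(d_1,\dots,d_n)=0$ whenever some $d_i=0$. A pv-monoid $(D,\oplus,\mathrm{val},\otimes,0,1)$ is a valuation monoid with a binary operation $\otimes$ and an element $1$ such that $\mathrm{val}(1,\dots,1)=1$ for any $n\ge1$ arguments, $0\otimes d=d\otimes0=0$, $1\otimes d=d\otimes1=d$. Standing assumption: $D$ is idempotent and $\mathrm{val}$ is symmetric. $D$ is left-$\oplus$-distributive if $d\otimes(d_1\oplus d_2)=(d\otimes d_1)\oplus(d\otimes d_2)$. $I(P)$ is the set of nonempty subsets of $P$, $C(P)$ the set of nonempty subsets of $I(P)$. PIL formulas: $\phi::=true\mid p\mid\overline{\phi}\mid\phi\vee\phi$ ($p\in P$), $\alpha\models_i p$ iff $p\in\alpha$, other connectives as usual. PCL formulas: $f::=true\mid\phi\mid\neg f\mid f\sqcup f\mid f+f$; $\gamma\models\phi$ iff every $\alpha\in\gamma$ satisfies $\phi$;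 $\neg,\sqcup$ are complement and union; $\gamma\models f_1+f_2$ iff $\gamma=\gamma_1\cup\gamma_2$ with $\gamma_1,\gamma_2\in C(P)$, $\gamma_1\models f_1,\gamma_2\models f_2$. w$_{\text{pvm}}$PCL formulas ($PCL(D,P)$): $\zeta::=d\mid f\mid\zeta\oplus\zeta\mid\zeta\otimes\zeta\mid\zeta\uplus\zeta\mid *\zeta$; semantics $\|\zeta\|:C(P)\to D$: $\|d\|(\gamma)=d$; $\|f\|(\gamma)\in\{0,1\}$ is $1$ iff $\gamma\models f$; $\oplus,\otimes$ pointwise; $\|\zeta_1\uplus\zeta_2\|(\gamma)=\bigoplus(\|\zeta_1\|(\gamma_1)\otimes\|\zeta_2\|(\gamma_2))$ over disjoint $\gamma_1,\gamma_2\in C(P)$ with union $\gamma$; $\|*\zeta\|(\gamma)=\bigoplus_{n>0}\bigoplus\mathrm{val}(\|\zeta\|(\gamma_1),\dots,\|\zeta\|(\gamma_n))$ over pairwise disjoint $\gamma_1,\dots,\gamma_n\in C(P)$ with union $\gamma$. $\equiv$ means equality of semantics on all of $C(P)$. An empty $\oplus$-sum is $0$. *)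

From Stdlib Require List Permutation.
From mathcomp Require Import all_boot.
Set Implicit Arguments. Unset Strict Implicit. Unset Printing Implicit Defensive.

(* pv-monoids: D^+ (nonempty finite sequences) modelled as seq D; the axioms
   on val are only imposed on nonempty sequences. *)
Record pvMonoid := PVMonoid {
  pv_car :> Type;
  pv_plus : pv_car -> pv_car -> pv_car;
  pv_val : seq pv_car -> pv_car;
  pv_times : pv_car -> pv_car -> pv_car;
  pv_zero : pv_car;
  pv_one : pv_car;
  pv_plusA : forall a b c, pv_plus a (pv_plus b c) = pv_plus (pv_plus a b) c;
  pv_plusC : forall a b, pv_plus a b = pv_plus b a;
  pv_plus0 : forall a, pv_plus pv_zero a = a;
  pv_val1 : forall d, pv_val [:: d] = d;
  pv_val0 : forall s, s <> [::] -> List.In pv_zero s -> pv_val s = pv_zero;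
  pv_valone : forall n, pv_val (nseq n.+1 pv_one) = pv_one;
  pv_mul0l : forall d, pv_times pv_zero d = pv_zero;
  pv_mul0r : forall d, pv_times d pv_zero = pv_zero;
  pv_mul1l : forall d, pv_times pv_one d = d;
  pv_mul1r : forall d, pv_times d pv_one = d;
  pv_idem : forall d, pv_plus d d = d;
  pv_valsym : forall s t, s <> [::] -> Permutation.Permutation s t -> pv_val s = pv_val t
}.

Section Logic.
Variable P : finType.

(* I(P) = nonempty subsets of P ; C(P) = nonempty sets of elements of I(P) *)
Definition isI (a : {set P}) : bool := a != set0.
Definition isC (g : {set {set P}}) : bool := (g != set0) && [forall a in g, isI a].

Inductive pil : Type :=
| PIL_true | PIL_port of P | PIL_neg of pil | PIL_or of pil & pil.

Fixpoint pil_sat (a : {set P}) (phi : pil) : bool :=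
  match phi with
  | PIL_true => true
  | PIL_port p => p \in a
  | PIL_neg phi1 => ~~ pil_sat a phi1
  | PIL_or phi1 phi2 => pil_sat a phi1 || pil_sat a phi2
  end.

Inductive pcl : Type :=
| PCL_true | PCL_pil of pil | PCL_neg of pcl | PCL_union of pcl & pcl
| PCL_plus of pcl & pcl.

Fixpoint pcl_sat (g : {set {set P}}) (f : pcl) : bool :=
  match f with
  | PCL_true => true
  | PCL_pil phi => [forall a in g, pil_sat a phi]
  | PCL_neg f1 => ~~ pcl_sat g f1
  | PCL_union f1 f2 => pcl_sat g f1 || pcl_sat g f2
  | PCL_plus f1 f2 => [exists g1, exists g2,
       [&& isC g1, isC g2, g == g1 :|: g2, pcl_sat g1 f1 & pcl_sat g2 f2]]
  end.

Variable D : pvMonoid.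

Inductive wpcl : Type :=
| W_const of D
| W_pcl of pcl
| W_plus of wpcl & wpcl
| W_times of wpcl & wpcl
| W_shuffle of wpcl & wpcl
| W_star of wpcl.


Definition is_part (n : nat) (g : {set {set P}}) (t : n.-tuple {set {set P}}) : bool :=
  [&& [forall i, isC (tnth t i)],
      [forall i, forall j, (i != j) ==> [disjoint tnth t i & tnth t j]]
    & (\bigcup_(i < n) tnth t i) == g].

Fixpoint wsem (z : wpcl) (g : {set {set P}}) : D :=
  match z with
  | W_const d => d
  | W_pcl f => if pcl_sat g f then @pv_one D else @pv_zero D
  | W_plus z1 z2 => pv_plus (wsem z1 g) (wsem z2 g)
  | W_times z1 z2 => pv_times (wsem z1 g) (wsem z2 g)
  | W_shuffle z1 z2 =>
      \big[@pv_plus D/pv_zero D]_(g1 : {set {set P}})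
        \big[@pv_plus D/pv_zero D]_(g2 : {set {set P}} |
            [&& isC g1, isC g2, [disjoint g1 & g2] & g == g1 :|: g2])
          pv_times (wsem z1 g1) (wsem z2 g2)
  | W_star z1 =>
      (* n ranges over 1..#|{set P}|; larger n admit no partitions into
         pairwise disjoint nonempty subsets of I(P), so contribute 0 *)
      \big[@pv_plus D/pv_zero D]_(n < #|{set P}|.+1 | 0 < n)
        \big[@pv_plus D/pv_zero D]_(t : n.-tuple {set {set P}} | is_part g t)
          @pv_val D (map (wsem z1) t)
  end.

Definition wequiv (z1 z2 : wpcl) : Prop :=
  forall g, isC g -> wsem z1 g = wsem z2 g.

End Logic.

From mathcomp Require Import all_boot.

(* Both sides are double ⊕-sums over the same splittings (g1, g2) of g: by
   left distributivity the constant d1 ⊗ d2 enters each summand, and the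
   summands then agree by commutativity and associativity of ⊗. *)

Section PvTimesTheory.

Variable D : pvMonoid.

Hypothesis pv_mulDr : forall d d1 d2 : D,
  pv_times d (pv_plus d1 d2) = pv_plus (pv_times d d1) (pv_times d d2).

Lemma pv_mulr_sumr (I : Type) (r : seq I) (Q : pred I) (F : I -> D) (d : D) :
  pv_times d (\big[@pv_plus D/pv_zero D]_(i <- r | Q i) F i) =
  \big[@pv_plus D/pv_zero D]_(i <- r | Q i) pv_times d (F i).
Proof. exact: (big_morph (pv_times d) (pv_mulDr d) (pv_mul0r d)). Qed.

Hypothesis pv_mulC : forall a b : D, pv_times a b = pv_times b a.
Hypothesis pv_mulA : forall a b c : D,
  pv_times a (pv_times b c) = pv_times (pv_times a b) c.

Lemma pv_mulACA (a b c d : D) :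
  pv_times (pv_times a b) (pv_times c d) = pv_times (pv_times a c) (pv_times b d).
Proof. by rewrite -!pv_mulA (pv_mulA b) (pv_mulC b) -pv_mulA. Qed.

End PvTimesTheory.

Theorem mainTheorem13 (D : pvMonoid) (P : finType)
  (leftDistr : forall d d1 d2 : D,
      pv_times d (pv_plus d1 d2) = pv_plus (pv_times d d1) (pv_times d d2))
  (mulC : forall a b : D, pv_times a b = pv_times b a)
  (mulA : forall a b c : D, pv_times a (pv_times b c) = pv_times (pv_times a b) c)
  (P_nonempty : 0 < #|P|)
  (d1 d2 : D) (z1 z2 : wpcl P D) :
  wequiv
    (W_shuffle (W_times (W_const P d1) z1) (W_times (W_const P d2) z2))
    (W_times (W_times (W_const P d1) (W_const P d2)) (W_shuffle z1 z2)).
Proof.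
move=> g _ /=.
rewrite pv_mulr_sumr //; apply: eq_bigr => g1 _.
rewrite pv_mulr_sumr //; apply: eq_bigr => g2 _.
exact: pv_mulACA.
Qed.
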